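(* Let $q\ge 1$ and $t\ge0$ be integers. (1) If a code $\mathcal{C}\subseteq\mathcal{S}_{\mathrm{all}}^q$ is a $2t$-tail-deletion-correcting code, then it is a $t$-tail-indel-correcting code. However, the converse does not hold in general: there exist $q$, $t$ and a code $\mathcal{C}\subseteq\mathcal{S}_{\mathrm{all}}^q$ that is $t$-tail-indel-correcting but not $2t$-tail-deletion-correcting. (2) For every integer $t\ge1$ there exist an integer $q$ and a code $\mathcal{C}\subseteq\mathcal{S}_{\mathrm{all}}^q$ that is a $(2t-1)$-tail-deletion-correcting code but not a $t$-tail-indel-correcting code.
   Context: Let $[q]=\{0,1,\dots,q-1\}$. For $1\le m\le q$, a partial permutation of length $m$ over $[q]$ is a sequence $\pi=(\pi_1,\dots,\pi_m)$ of $m$ pairwise distinct elements of $[q]$. Let $\mathcal{S}_m^q$ be the set of those of length $m$ and $\mathcal{S}_{\mathrm{all}}^q=\bigcup_{m=1}^{q}\mathcal{S}_m^q$. A code is any subset of $\mathcal{S}_{\mathrm{all}}^q$. Tail deletions: for $\pi$ of length $m$ and integer $j\ge 0$, $\pi_{\downarrow j}=(\pi_{k+1},\dots,\pi_m)$ with $k=\min(j,m-1)$ (leftmost symbols are deleted; the last symbol is never deleted); $\mathcal{B}_{\mathrm{del}}^t(\pi)=\{\pi_{\downarrow j}:0\le j\le t\}$. Tail indels: $\mathcal{B}_{\mathrm{indel}}^t(\pi)$ is the set of all partial permutations obtainable from $\pi$ by a sequence of at most $t$ operations, each being either a single tail deletion (removing the first symbol of a partial permutation of length at least $2$) or a single tail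 insertion (prepending an element of $[q]$ not already occurring in it). For $X\in\{\mathrm{del},\mathrm{indel}\}$, a code $\mathcal{C}$ is $t$-tail-$X$-correcting if $\mathcal{B}_X^t(\pi_1)\cap\mathcal{B}_X^t(\pi_2)=\emptyset$ for all distinct $\pi_1,\pi_2\in\mathcal{C}$. *)

From mathcomp Require Import all_boot.
Set Implicit Arguments. Unset Strict Implicit. Unset Printing Implicit Defensive.

Definition is_pperm (q : nat) (s : seq nat) : Prop :=
  [/\ uniq s, all (fun a => a < q) s & 1 <= size s <= q].

(* A code is a subset of S_all^q, represented as a predicate. *)
Definition is_code (q : nat) (C : seq nat -> Prop) : Prop :=
  forall s, C s -> is_pperm q s.

Definition tail_del (j : nat) (s : seq nat) : seq nat :=
  drop (minn j (size s).-1) s.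

Definition del_ball (t : nat) (pi s : seq nat) : Prop :=
  exists2 j, j <= t & s = tail_del j pi.

Definition indel_step (q : nat) (s s' : seq nat) : Prop :=
  (2 <= size s /\ s' = behead s) \/
  (exists2 a, (a < q) && (a \notin s) & s' = a :: s).

Fixpoint indel_reach (q n : nat) (s s' : seq nat) : Prop :=
  match n with
  | 0 => s' = s
  | n'.+1 => s' = s \/ exists2 s'', indel_step q s s'' & indel_reach q n' s'' s'
  end.

Definition indel_ball (q t : nat) (pi s : seq nat) : Prop := indel_reach q t pi s.

Definition tail_del_correcting (t : nat) (C : seq nat -> Prop) : Prop :=
  forall p1 p2, C p1 -> C p2 -> p1 <> p2 ->
    forall s, ~ (del_ball t p1 s /\ del_ball t p2 s).

Definition tail_indel_correcting (q t : nat) (C : seq nat -> Prop) : Prop :=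
  forall p1 p2, C p1 -> C p2 -> p1 <> p2 ->
    forall s, ~ (indel_ball q t p1 s /\ indel_ball q t p2 s).

From mathcomp Require Import all_boot zify.
Set Implicit Arguments. Unset Strict Implicit.

(* Every word within [n] tail indels of [p] has the shape [u ++ drop k p]:
   some prefix [u] of inserted symbols in front of a nonempty suffix of [p],
   with [k + size u <= n].  If two balls of radius [t] meet in a word, the
   shorter of the two suffixes is a suffix of the longer one, obtained from
   it by deleting at most [t] further symbols; so the two codewords have a
   common tail deletion within distance [2t].  Conversely, the examples are
   codes of two words: [{012, 32}] over [4] for [t = 1] (the balls of radius
   1 are disjoint, but both words delete to [2]), and [{0 1 .. 2t, 2t}],
   whose deletion balls of radius [2t - 1] are separated by length while
   [t .. 2t] is both [t] deletions from the first and [t] insertions in front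
   of the second. *)

Lemma tail_del_drop j s : j < size s -> tail_del j s = drop j s.
Proof. by move=> lt_js; rewrite /tail_del (minn_idPl _) //; lia. Qed.

Lemma del_ball_drop t k p : k <= t -> k < size p -> del_ball t p (drop k p).
Proof. by move=> le_kt lt_kp; exists k => //; rewrite tail_del_drop. Qed.

Lemma code_size_gt0 q C s : is_code q C -> C s -> 0 < size s.
Proof. by move=> codeC /codeC [_ _ /andP[]]. Qed.

Section IndelReach.

Variable q : nat.

Lemma indel_reach_shape n s s' p u k : indel_reach q n s s' ->
  s = u ++ drop k p -> k < size p ->
  exists u' k', [/\ s' = u' ++ drop k' p, k' < size p & k' + size u' <= k + size u + n].
Proof.
elim: n s u k => [|n IHn] s u k /=.
  by move=> -> -> lt_kp; exists u, k; rewrite addn0.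
case=> [-> -> lt_kp|[s'' step reach] def_s lt_kp].
  by exists u, k; split => //; lia.
case: step => [[size_s def_s'']|[a _ def_s'']]; subst s''.
  case: u def_s => [|a u] /= def_s.
    have def_bs : behead s = [::] ++ drop k.+1 p by rewrite def_s /= -drop1 drop_drop.
    have lt_k1p : k.+1 < size p by move: size_s; rewrite def_s size_drop; lia.
    have [u' [k' [-> lt_k'p le_k'u']]] := IHn _ _ _ reach def_bs lt_k1p.
    by exists u', k'; split => //; move: le_k'u' => /=; lia.
  have [u' [k' [-> lt_k'p le_k'u']]] := IHn _ u k reach (congr1 behead def_s) lt_kp.
  by exists u', k'; split => //; lia.
have def_as : a :: s = (a :: u) ++ drop k p by rewrite def_s.
have [u' [k' [-> lt_k'p le_k'u']]] := IHn _ _ _ reach def_as lt_kp.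
by exists u', k'; split => //; move: le_k'u' => /=; lia.
Qed.

Lemma indel_ball_shape t p s : 0 < size p -> indel_ball q t p s ->
  exists u k, [/\ s = u ++ drop k p, k < size p & k + size u <= t].
Proof. by move=> p_gt0 /(indel_reach_shape (u := [::]) (k := 0)); apply; rewrite ?drop0. Qed.

Lemma indel_reach_rcons n s s' s'' : indel_reach q n s s' -> indel_step q s' s'' ->
  indel_reach q n.+1 s s''.
Proof.
elim: n s => [|n IHn] s /=; first by move=> -> step; right; exists s''.
case=> [-> step|[s1 step1 reach] step]; right.
  by exists s''; last left.
by exists s1; last exact: IHn.
Qed.

Lemma indel_reach_drop n s : n < size s -> indel_reach q n s (drop n s).
Proof.
elim: n s => [|n IHn] s /=; first by rewrite drop0.
move=> lt_ns; right; exists (behead s); first by left; split => //; lia.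
by rewrite -addn1 -drop_drop drop1; apply: IHn; rewrite size_behead; lia.
Qed.

Lemma indel_reach_cat u s : uniq (u ++ s) -> all (gtn q) u ->
  indel_reach q (size u) s (u ++ s).
Proof.
elim: u => [|a u IHu] //= /andP[a_notin uniq_us] /andP[lt_aq lt_uq].
apply: indel_reach_rcons (IHu uniq_us lt_uq) _.
by right; exists a; rewrite ?lt_aq.
Qed.

End IndelReach.

Lemma cat_eq_drop (u1 x1 u2 x2 : seq nat) : u1 ++ x1 = u2 ++ x2 ->
  size x1 <= size x2 -> x1 = drop (size u1 - size u2) x2.
Proof.
move=> eq_cat le_x12.
have eq_size : size u1 + size x1 = size u2 + size x2 by rewrite -!size_cat eq_cat.
rewrite -(drop_size_cat x1 (erefl (size u1))) eq_cat drop_cat ifF //.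
by apply/negbTE; rewrite -leqNgt; lia.
Qed.

Lemma common_suffix_del_ball t p1 p2 u1 u2 k1 k2 :
  u1 ++ drop k1 p1 = u2 ++ drop k2 p2 ->
  k1 < size p1 -> k1 + size u1 <= t -> k2 < size p2 -> k2 + size u2 <= t ->
  size (drop k1 p1) <= size (drop k2 p2) ->
  del_ball (2 * t) p1 (drop k1 p1) /\ del_ball (2 * t) p2 (drop k1 p1).
Proof.
move=> eq_cat lt_k1 le_t1 lt_k2 le_t2 le_size.
have eq_size : size u1 + size (drop k1 p1) = size u2 + size (drop k2 p2).
  by rewrite -!size_cat eq_cat.
have suffix12 := cat_eq_drop eq_cat le_size.
move: le_size eq_size; rewrite !size_drop => le_size eq_size.
split; first by apply: del_ball_drop; lia.
by rewrite suffix12 drop_drop; apply: del_ball_drop; lia.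
Qed.

Theorem tail_del_correcting_double_indel q t C : is_code q C ->
  tail_del_correcting (2 * t) C -> tail_indel_correcting q t C.
Proof.
move=> codeC delC p1 p2 Cp1 Cp2 ne_p12 s [ball1 ball2].
have [u1 [k1 [def1 lt_k1 le_t1]]] := indel_ball_shape (code_size_gt0 codeC Cp1) ball1.
have [u2 [k2 [def2 lt_k2 le_t2]]] := indel_ball_shape (code_size_gt0 codeC Cp2) ball2.
have eq_cat : u1 ++ drop k1 p1 = u2 ++ drop k2 p2 by rewrite -def1 -def2.
case: (leqP (size (drop k1 p1)) (size (drop k2 p2))) => [le_size|/ltnW le_size].
  exact: delC Cp1 Cp2 ne_p12 _ (common_suffix_del_ball eq_cat lt_k1 le_t1 lt_k2 le_t2 le_size).
have [del2 del1] := common_suffix_del_ball (esym eq_cat) lt_k2 le_t2 lt_k1 le_t1 le_size.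
exact: delC Cp2 Cp1 (nesym ne_p12) _ (conj del2 del1).
Qed.

Definition pair_code (p1 p2 s : seq nat) : Prop := s = p1 \/ s = p2.

Lemma pair_code_indel_correcting q t p1 p2 :
  (forall s, indel_ball q t p1 s -> ~ indel_ball q t p2 s) ->
  tail_indel_correcting q t (pair_code p1 p2).
Proof.
move=> disj r1 r2 [] -> [] -> // _ s [ball1 ball2]; first exact: disj ball1 ball2.
exact: disj ball2 ball1.
Qed.

Lemma pair_code_del_correcting t p1 p2 :
  (forall s, del_ball t p1 s -> ~ del_ball t p2 s) ->
  tail_del_correcting t (pair_code p1 p2).
Proof.
move=> disj r1 r2 [] -> [] -> // _ s [ball1 ball2]; first exact: disj ball1 ball2.
exact: disj ball2 ball1.
Qed.

Lemma indel_ball1 q p s : 0 < size p -> indel_ball q 1 p s ->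
  [\/ s = p, s = behead p | exists a, s = a :: p].
Proof.
move=> p_gt0 /(indel_ball_shape p_gt0) [u [k [-> lt_kp]]].
case: u => [|a [|b u]] /= le_1; last lia.
  case: k lt_kp le_1 => [|[|k]] _ le_1; last lia.
    by constructor 1; rewrite drop0.
  by constructor 2; rewrite drop1.
have -> : k = 0 by lia.
by constructor 3; exists a; rewrite drop0.
Qed.

Lemma indel_not_double_del : exists q t C, [/\ 1 <= q, is_code q C,
  tail_indel_correcting q t C & ~ tail_del_correcting (2 * t) C].
Proof.
exists 4, 1, (pair_code [:: 0; 1; 2] [:: 3; 2]); split => //.
- by move=> s [] ->.
- apply: pair_code_indel_correcting => s /indel_ball1-/(_ isT) ball1.
  by move=> /indel_ball1-/(_ isT); case: ball1 => [->|->|[a ->]] [|//|[b []]].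
- move=> delC; apply: (delC _ _ (or_introl erefl) (or_intror erefl) _ [:: 2]) => //.
  by split; [exists 2 | exists 1].
Qed.

Lemma odd_del_not_indel t : 1 <= t -> exists q C, [/\ 1 <= q, is_code q C,
  tail_del_correcting (2 * t - 1) C & ~ tail_indel_correcting q t C].
Proof.
move=> t_gt0; set p1 := iota 0 (2 * t).+1; set p2 := [:: 2 * t].
have size_p1 : size p1 = (2 * t).+1 by rewrite size_iota.
have drop_p1 : drop t p1 = iota t t ++ p2.
  rewrite /p1 (_ : (2 * t).+1 = t + (t + 1)); last by lia.
  rewrite iotaD drop_size_cat ?size_iota // iotaD /= add0n.
  by congr (_ ++ [:: _]); lia.
exists (2 * t).+1, (pair_code p1 p2); split => //.
- move=> s [] ->; split => //.
  + exact: iota_uniq.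
  + by apply/allP => x; rewrite mem_iota.
  + by rewrite size_p1 ltn0Sn leqnn.
  + by rewrite /= andbT.
- apply: pair_code_del_correcting => s [j1 le_j1 ->] [j2 _].
  by move/(congr1 size); rewrite /tail_del !size_drop size_p1 /=; lia.
- have ne_p12 : p1 <> p2 by move/(congr1 size); rewrite size_p1 /=; lia.
  move=> indelC; apply: (indelC _ _ (or_introl erefl) (or_intror erefl) ne_p12 (drop t p1)).
  split; first by apply: indel_reach_drop; lia.
  rewrite drop_p1; have := @indel_reach_cat (2 * t).+1 (iota t t) p2.
  rewrite size_iota; apply.
    by rewrite -drop_p1 drop_uniq ?iota_uniq.
  by apply/allP => x; rewrite mem_iota /=; lia.
Qed.

Theorem mainTheorem6 :
  ((forall (q t : nat) (C : seq nat -> Prop), 1 <= q -> is_code q C ->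
      tail_del_correcting (2 * t) C -> tail_indel_correcting q t C)
   /\
   (exists (q t : nat) (C : seq nat -> Prop),
      [/\ 1 <= q, is_code q C, tail_indel_correcting q t C
        & ~ tail_del_correcting (2 * t) C]))
  /\
  (forall t : nat, 1 <= t ->
     exists (q : nat) (C : seq nat -> Prop),
       [/\ 1 <= q, is_code q C, tail_del_correcting (2 * t - 1) C
         & ~ tail_indel_correcting q t C]).
Proof.
split; last exact: odd_del_not_indel.
split; last exact: indel_not_double_del.
by move=> q t C _; apply: tail_del_correcting_double_indel.
Qed.
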